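(* Let $d_d=2t_d+1$ with $t_d\ge0$, let $f:\mathbb{F}_q^k\to\mathrm{Im}(f)$ be a $d_d$-locally binary function with $|\mathrm{Im}(f)|\ge2$, and suppose there exists a perfect linear $[n,k,d_d]$ code over $\mathbb{F}_q$, i.e. $\sum_{i=0}^{t_d}\binom{n}{i}(q-1)^i=q^{n-k}$. Then $r_f(k:d_d,d_d+1)=n-k+1$.
   Context: $d(\cdot,\cdot)$ is Hamming distance. $B_f(u,\rho)=\{f(u'):d(u,u')\le\rho\}$; $f$ is $\rho$-locally binary if $|B_f(u,\rho)|\le2$ for all $u$. For integers $0\le d_d\le d_f$, an $(f\!:d_d,d_f)$-FCC with redundancy $r$ is a systematic encoding $\mathfrak{C}_f(u)=(u,p_u)\in\mathbb{F}_q^{k+r}$ with $d(\mathfrak{C}_f(u_1),\mathfrak{C}_f(u_2))\ge d_d$ whenever $u_1\ne u_2$ and $\ge d_f$ whenever $f(u_1)\ne f(u_2)$; $r_f(k:d_d,d_f)$ is the minimum such $r$. *)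

From HB Require Import structures.
From mathcomp Require Import all_boot all_order all_algebra.
Set Implicit Arguments. Unset Strict Implicit. Unset Printing Implicit Defensive.
Import GRing.Theory.
Local Open Scope ring_scope.

Section Defs.
Variable F : finFieldType.

Definition dH (n : nat) (u v : 'rV[F]_n) : nat := #|[pred i : 'I_n | u 0 i != v 0 i]|.

Definition Bf (Y : eqType) (k : nat) (f : 'rV[F]_k -> Y) (u : 'rV[F]_k) (rho : nat)
  : seq Y := undup [seq f u' | u' <- enum 'rV[F]_k & (dH u u' <= rho)%N].

Definition locally_binary (Y : eqType) (k : nat) (f : 'rV[F]_k -> Y) (rho : nat) : Prop :=
  forall u, (size (Bf f u rho) <= 2)%N.

(* The systematic encoding u |-> (u, p u) is an (f : dd, df)-FCC with redundancy r *)
Definition is_FCC (Y : eqType) (k : nat) (f : 'rV[F]_k -> Y) (dd df r : nat)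
  (p : 'rV[F]_k -> 'rV[F]_r) : Prop :=
  forall u1 u2 : 'rV[F]_k,
    (u1 != u2 -> (dd <= dH (row_mx u1 (p u1)) (row_mx u2 (p u2)))%N) /\
    (f u1 != f u2 -> (df <= dH (row_mx u1 (p u1)) (row_mx u2 (p u2)))%N).

Definition is_opt_redundancy (Y : eqType) (k : nat) (f : 'rV[F]_k -> Y) (dd df r : nat)
  : Prop :=
  (exists p : 'rV[F]_k -> 'rV[F]_r, is_FCC f dd df p) /\
  (forall r' (p : 'rV[F]_k -> 'rV[F]_r'), is_FCC f dd df p -> (r <= r')%N).

Definition perfect_linear_code (n k t : nat) (C : {vspace 'rV[F]_n}) : Prop :=
  [/\ \dim C = k,
      (forall c1 c2, c1 \in C -> c2 \in C -> c1 != c2 -> (2 * t + 1 <= dH c1 c2)%N),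
      (exists c1 c2, [/\ c1 \in C, c2 \in C & dH c1 c2 = 2 * t + 1]) &
      (* perfect: radius-t balls around codewords cover the space *)
      (forall v : 'rV[F]_n, exists2 c, c \in C & (dH v c <= t)%N)].
End Defs.

From HB Require Import structures.
From mathcomp Require Import all_boot all_order all_algebra zify.
Set Implicit Arguments. Unset Strict Implicit. Unset Printing Implicit Defensive.
Import GRing.Theory.
Local Open Scope ring_scope.

(* Upper bound: a perfect linear code has a systematic encoder u |-> (u, q u)
   with [n - k] check symbols and minimum distance [2t+1]; since [f] is
   locally binary, one extra bit can separate the two values of [f] inside
   every ball of radius [2t+1], which raises the distance to [2t+2] between
   inputs with different function values.
   Lower bound: if an FCC had redundancy [r <= n - k], padding it with zeros
   gives [q^k] words of length [n] at pairwise distance [2t+1]; by the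
   sphere-packing count these form a perfect code as well.  Then any two
   codewords can be joined by a chain of codewords at distance [<= 2t+1] from
   each other, so the requirement [d_f = 2t+2] forces [f] to be constant. *)

Section Hamming.
Variable F : finFieldType.

Lemma dH_sym n (u v : 'rV[F]_n) : dH u v = dH v u.
Proof. by apply: eq_card => i; rewrite !inE /= eq_sym. Qed.

Lemma dHxx n (u : 'rV[F]_n) : dH u u = 0%N.
Proof. by apply: eq_card0 => i; rewrite !inE /= eqxx. Qed.

Lemma dH_eq0 n (u v : 'rV[F]_n) : dH u v = 0%N -> u = v.
Proof.
by move/card0_eq => uv; apply/rowP => i; have := uv i; rewrite !inE => /negbFE/eqP.
Qed.

Lemma dH_ub n (u v : 'rV[F]_n) : (dH u v <= n)%N.
Proof. by apply: leq_trans (max_card _) _; rewrite card_ord. Qed.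

Lemma dH_triangle n (x y z : 'rV[F]_n) : (dH x z <= dH x y + dH y z)%N.
Proof.
have sub : [pred i : 'I_n | x 0 i != z 0 i] \subset
  [predU [pred i : 'I_n | x 0 i != y 0 i] & [pred i : 'I_n | y 0 i != z 0 i]].
  apply/subsetP => i; rewrite !inE /=; apply: contraLR.
  by rewrite negb_or !negbK => /andP[/eqP-> /eqP->].
by apply: leq_trans (subset_leq_card sub) _; rewrite -cardUI leq_addr.
Qed.

Lemma dH_translate n (x c d : 'rV[F]_n) : dH (x - c + d) d = dH x c.
Proof. by apply: eq_card => i; rewrite !inE /= !mxE -subr_eq0 addrK subr_eq0. Qed.

Lemma dH_row_mx m1 m2 (a a' : 'rV[F]_m1) (b b' : 'rV[F]_m2) :
  dH (row_mx a b) (row_mx a' b') = (dH a a' + dH b b')%N.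
Proof.
rewrite /dH -!sum1_card !(big_mkcond (fun i => i \in _)) big_split_ord /=.
by congr (_ + _)%N; apply: eq_bigr => i _; rewrite !inE /= ?row_mxEl ?row_mxEr.
Qed.

Lemma dH_castmx m1 m2 (e : m1 = m2) (a b : 'rV[F]_m1) :
  dH (castmx (erefl 1%N, e) a) (castmx (erefl 1%N, e) b) = dH a b.
Proof. by case: m2 / e; rewrite !castmx_id. Qed.

Lemma dH_bit (b1 b2 : bool) :
  dH (\row_(j < 1) (b1%:R : F)) (\row_(j < 1) (b2%:R : F)) = (b1 != b2).
Proof.
have neq10 : (1 : F) != 0 by exact: oner_neq0.
rewrite /dH; case: b1; case: b2 => /=.
- by apply: eq_card0 => j; rewrite !inE !mxE eqxx.
- by rewrite -[RHS](card_ord 1); apply: eq_card => j; rewrite !inE !mxE.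
- by rewrite -[RHS](card_ord 1); apply: eq_card => j; rewrite !inE !mxE eq_sym.
- by apply: eq_card0 => j; rewrite !inE !mxE eqxx.
Qed.

Lemma dH_colsub_cover m1 m2 n (g1 : 'I_m1 -> 'I_n) (g2 : 'I_m2 -> 'I_n)
    (x y : 'rV[F]_n) :
  (forall i, (i \in codom g1) || (i \in codom g2)) ->
  (dH x y <= dH (colsub g1 x) (colsub g1 y) + dH (colsub g2 x) (colsub g2 y))%N.
Proof.
move=> cover.
have sub : [set i | x 0 i != y 0 i] \subset
    g1 @: [set j | colsub g1 x 0 j != colsub g1 y 0 j]
    :|: g2 @: [set j | colsub g2 x 0 j != colsub g2 y 0 j].
  apply/subsetP => i; rewrite inE => xy_i.
  by case/orP: (cover i) => /codomP[j def_i]; apply/setUP; [left | right];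
    apply/imsetP; exists j; rewrite // inE !mxE -def_i.
have -> : dH x y = #|[set i | x 0 i != y 0 i]| by apply: eq_card => i; rewrite !inE.
apply: leq_trans (subset_leq_card sub) _; apply: leq_trans (leq_card_setU _ _) _.
by apply: leq_add; apply: leq_trans (leq_imset_card _ _) _;
  apply: eq_leq; apply: eq_card => j; rewrite !inE.
Qed.

Lemma dH_step n (w z : 'rV[F]_n) :
  w != z -> exists2 w', (dH w w' <= 1)%N & (dH w' z < dH w z)%N.
Proof.
move=> wz; have [i w_i] : exists i, w 0 i != z 0 i.
  by apply/existsP; apply: contraR wz => /existsPn wz; apply/eqP/rowP => i;
    apply/eqP; have := wz i; rewrite negbK.
exists (\row_l (if l == i then z 0 l else w 0 l)).
  apply: leq_trans (subset_leq_card (B := pred1 i) _) _; last by rewrite card1.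
  by apply/subsetP => l; rewrite !inE mxE; case: (l =P i) => // _; rewrite eqxx.
apply: proper_card; apply/properP; split.
  by apply/subsetP => l; rewrite !inE mxE; case: (l =P i) => // ->; rewrite eqxx.
by exists i; rewrite !inE ?mxE ?eqxx.
Qed.

End Hamming.

Section Codes.
Variable F : finFieldType.

(* Translating each word [x] from its [c]-ball into the ball of the
   corresponding [d]-codeword is injective because the [d]-balls are disjoint;
   an injective self-map of a finite set is onto. *)
Lemma separated_code_covers m n t (c d : 'rV[F]_m -> 'rV[F]_n) :
  (forall v, exists u, (dH v (c u) <= t)%N) ->
  (forall u1 u2, u1 != u2 -> (2 * t + 1 <= dH (d u1) (d u2))%N) ->
  forall w, exists u, (dH w (d u) <= t)%N.
Proof.
move=> c_cover d_sep.
pose phi x := if [pick u | (dH x (c u) <= t)%N] is Some u then x - c u + d u else x.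
have pick_c x : exists2 u, [pick u | (dH x (c u) <= t)%N] = Some u & (dH x (c u) <= t)%N.
  case: pickP => [u xu | none]; first by exists u.
  by have [u xu] := c_cover x; have := none u; rewrite xu.
have phi_inj : injective phi.
  move=> x y; rewrite /phi; have [ux -> xu] := pick_c x; have [uy -> yu] := pick_c y.
  move=> E; suff uxy : ux = uy by move: E; rewrite uxy => /addIr/addIr.
  apply/eqP; apply: contraT => /d_sep far.
  have := dH_triangle (d ux) (x - c ux + d ux) (d uy).
  rewrite [dH (d ux) (_ - _ + _)]dH_sym dH_translate E dH_translate; lia.
have [g _ gK] := injF_bij phi_inj.
move=> w; rewrite -(gK w) /phi; have [u -> gu] := pick_c (g w).
by exists u; rewrite dH_translate.
Qed.

(* Induction on the distance from [w] to [d u0]: move [w] one coordinate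
   closer and compare the codewords nearest to the two words. *)
Lemma covering_separated_fconst (Y : eqType) m n t (f : 'rV[F]_m -> Y)
    (d : 'rV[F]_m -> 'rV[F]_n) :
  (forall w, exists u, (dH w (d u) <= t)%N) ->
  (forall u1 u2, f u1 != f u2 -> (2 * t + 2 <= dH (d u1) (d u2))%N) ->
  forall u1 u2, f u1 = f u2.
Proof.
move=> d_cover d_sep u1 u0.
have near a b : (dH (d a) (d b) <= 2 * t + 1)%N -> f a = f b.
  by move=> ab; apply/eqP; apply: contraTT ab => /d_sep; lia.
suff walk j w : (dH w (d u0) <= j)%N -> forall u, (dH w (d u) <= t)%N -> f u = f u0.
  by apply: (walk n (d u1)); rewrite ?dH_ub ?dHxx.
elim: j w => [|j IH] w w_u0 u w_u.
  have w_def : w = d u0 by apply: dH_eq0; lia.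
  by move: w_u; rewrite w_def dH_sym => ?; apply: near; lia.
have [w_def | w_ne] := eqVneq w (d u0).
  by apply: (IH (d u0)); rewrite ?dHxx -?w_def.
have [w' ww' w'_closer] := dH_step w_ne.
have [v w'_v] := d_cover w'.
rewrite -(IH w' _ v w'_v); last by lia.
apply: near; have := dH_triangle (d u) w (d v); have := dH_triangle w w' (d v).
by rewrite dH_sym in w_u; lia.
Qed.

Lemma systematic_encoder n (C : {vspace 'rV[F]_n}) :
  exists (c : 'rV[F]_(\dim C) -> 'rV[F]_n) (fi : 'I_(\dim C) -> 'I_n),
   [/\ injective fi, forall u, c u \in C, forall u, colsub fi (c u) = u
     & forall x, x \in C -> exists u, x = c u].
Proof.
pose b := vbasis C.
pose G : 'M[F]_(\dim C, n) := \matrix_(i < \dim C) b`_i.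
have rowG i : row i G = b`_i by rewrite rowK.
have freeG : row_free G.
  rewrite -kermx_eq0; apply/eqP/row_matrixP => i; rewrite row0.
  set u := row i (kermx G).
  have uG : u *m G = 0 by apply/sub_kermxP; exact: row_sub.
  have sum0 : \sum_(j < \dim C) u 0 j *: b`_j = 0.
    by rewrite -[RHS]uG mulmx_sum_row; apply: eq_bigr => j _; rewrite rowG.
  have u0 := (freeP (basis_free (vbasisP C))) (fun j => u 0 j) sum0.
  by apply/rowP => j; rewrite u0 mxE.
have fullGT : row_full G^T by rewrite /row_full mxrank_tr.
pose fi := fullrankfun fullGT.
pose N := colsub fi G.
have uN : N \in unitmx by rewrite -unitmx_tr trmx_mxsub; exact: fullrowsub_unit.
exists (fun u => (u *m invmx N) *m G), fi; split.
- exact: fullrankfun_inj.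
- move=> u; rewrite mulmx_sum_row; apply: memv_suml => j _.
  by rewrite rowG; apply/memvZ/vbasis_mem/mem_nth; rewrite size_tuple.
- by move=> u; rewrite -mulmx_colsub mulmxKV.
- move=> x xC; pose a := \row_j coord b j x.
  have xa : x = a *m G.
    rewrite mulmx_sum_row {1}(coord_vbasis xC); apply: eq_bigr => j _.
    by rewrite rowG mxE.
  by exists (a *m N); rewrite mulmxK // -mulmx_colsub -xa.
Qed.

Lemma complement_enum k n (fi : 'I_k -> 'I_n) : injective fi ->
  exists g : 'I_(n - k) -> 'I_n, forall i, (i \in codom fi) || (i \in codom g).
Proof.
move=> fi_inj; pose e := enum [predC codom fi].
have size_e : size e = (n - k)%N.
  have := cardC (mem (codom fi)); rewrite card_codom // -cardE => card_e.
  rewrite !card_ord in card_e; apply: (@addnI k).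
  by rewrite subnKC; [exact: card_e | rewrite -card_e leq_addr].
have default (j : 'I_(n - k)) : 'I_n by exists j; rewrite (leq_trans (ltn_ord j)) ?leq_subr.
exists (fun j => nth (default j) e j) => i; apply/orP.
case: (boolP (i \in codom fi)) => fi_i; [by left | right].
have ei : (index i e < n - k)%N by rewrite -size_e index_mem mem_enum.
by apply/codomP; exists (Ordinal ei); rewrite /= nth_index // mem_enum.
Qed.

End Codes.

Section LocallyBinary.
Variables (F : finFieldType) (Y : eqType) (k rho : nat) (f : 'rV[F]_k -> Y).
Hypothesis f_lb : locally_binary f rho.

Lemma mem_Bf u v : (dH u v <= rho)%N -> f v \in Bf f u rho.
Proof. by move=> uv; rewrite mem_undup; apply: map_f; rewrite mem_filter mem_enum andbT. Qed.

Lemma locally_binary_ball a b v : (dH a b <= rho)%N -> f a != f b ->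
  (dH a v <= rho)%N -> (f v == f a) || (f v == f b).
Proof.
move=> ab fab av; apply: contraT; rewrite negb_or => /andP[va vb].
have : (size [:: f a; f b; f v] <= size (Bf f a rho))%N.
  apply: uniq_leq_size.
    by rewrite /= !inE !negb_or fab (eq_sym (f a)) (eq_sym (f b)) va vb.
  by move=> y; rewrite !inE => /or3P[] /eqP ->; apply: mem_Bf; rewrite ?dHxx.
by move/leq_trans/(_ (f_lb a)).
Qed.

(* The bit says whether [f u] comes first, in a fixed enumeration of the
   domain, among the (at most two) values of [f] on the ball around [u]. *)
Lemma locally_binary_separator : exists s : 'rV[F]_k -> bool,
  forall a b, (dH a b <= rho)%N -> f a != f b -> s a != s b.
Proof.
pose idx y := find (fun w => f w == y) (enum 'rV[F]_k).
have idx_inj a b : idx (f a) = idx (f b) -> f a = f b.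
  have idxK c : f (nth a (enum 'rV[F]_k) (idx (f c))) = f c.
    have : has (fun w => f w == f c) (enum 'rV[F]_k).
      by apply/hasP; exists c; rewrite ?mem_enum.
    by move/(nth_find a)/eqP.
  by move=> E; rewrite -idxK E idxK.
pose s u := [forall v, (dH u v <= rho)%N ==> (idx (f u) <= idx (f v))%N].
have sE a b : (dH a b <= rho)%N -> f a != f b -> s a = (idx (f a) <= idx (f b))%N.
  move=> ab fab; case: leqP => [le_ab | lt_ba].
    apply/forallP => v; apply/implyP => av.
    by case/orP: (locally_binary_ball ab fab av) => /eqP ->.
  by apply/negbTE/forallPn; exists b; rewrite negb_imply ab -ltnNge.
exists s => a b ab fab; rewrite (sE a b) // (sE b a) 1?dH_sym 1?eq_sym //.
have : idx (f a) != idx (f b) by apply: contra fab => /eqP/idx_inj ->.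
by case: ltngtP.
Qed.

End LocallyBinary.

Lemma fcc_of_systematic_code (F : finFieldType) (Y : eqType) k n m t
    (f : 'rV[F]_k -> Y) (c : 'rV[F]_k -> 'rV[F]_n)
    (g1 : 'I_k -> 'I_n) (g2 : 'I_m -> 'I_n) :
  locally_binary f (2 * t + 1) ->
  (forall a b, a != b -> (2 * t + 1 <= dH (c a) (c b))%N) ->
  (forall u, colsub g1 (c u) = u) ->
  (forall i, (i \in codom g1) || (i \in codom g2)) ->
  exists p : 'rV[F]_k -> 'rV[F]_(m + 1), is_FCC f (2 * t + 1) (2 * t + 2) p.
Proof.
move=> f_lb c_sep cK cover; have [s s_sep] := locally_binary_separator f_lb.
exists (fun u => row_mx (colsub g2 (c u)) (\row_(j < 1) ((s u)%:R : F))) => a b.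
rewrite !dH_row_mx dH_bit.
have := dH_colsub_cover (c a) (c b) cover; rewrite !cK => c_ab.
split=> [ab | fab]; first by have := c_sep a b ab; lia.
have ab : a != b by apply: contra fab => /eqP ->.
have := c_sep a b ab; case: (leqP (dH a b) (2 * t + 1)) => [near | ]; last lia.
by have := s_sep a b near fab; case: (s a != s b) => /=; lia.
Qed.

Lemma fcc_redundancy_gt (F : finFieldType) (Y : eqType) k n t r
    (f : 'rV[F]_k -> Y) (c : 'rV[F]_k -> 'rV[F]_n) (p : 'rV[F]_k -> 'rV[F]_r) :
  (forall v, exists u, (dH v (c u) <= t)%N) ->
  (exists u1 u2, f u1 != f u2) ->
  is_FCC f (2 * t + 1) (2 * t + 2) p -> (n < k + r)%N.
Proof.
move=> c_cover [u1 [u2 f12]] p_fcc; rewrite ltnNge; apply/negP => kr_n.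
have e : (k + r + (n - (k + r)))%N = n by rewrite subnKC.
pose d u := castmx (erefl 1%N, e) (row_mx (row_mx u (p u)) (0 : 'rV[F]_(n - (k + r)))).
have dE a b : dH (d a) (d b) = dH (row_mx a (p a)) (row_mx b (p b)).
  by rewrite dH_castmx dH_row_mx dHxx addn0.
have d_cover : forall w, exists u, (dH w (d u) <= t)%N.
  by apply: (separated_code_covers c_cover) => a b ab; rewrite dE; case: (p_fcc a b) => /(_ ab).
have d_sep a b : f a != f b -> (2 * t + 2 <= dH (d a) (d b))%N.
  by move=> fab; rewrite dE; case: (p_fcc a b) => _ /(_ fab).
by move: f12; rewrite (covering_separated_fconst d_cover d_sep u1 u2) eqxx.
Qed.

Theorem corollary8 (F : finFieldType) (Y : eqType) (n k td : nat)
  (f : 'rV[F]_k -> Y) :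
  locally_binary f (2 * td + 1) ->
  (exists u1 u2, f u1 != f u2) ->
  (exists C : {vspace 'rV[F]_n}, perfect_linear_code k td C) ->
  is_opt_redundancy f (2 * td + 1) (2 * td + 2) (n - k + 1).
Proof.
move=> f_lb f_nonconst [C [dimC C_sep _ C_cover]]; subst k.
have [c [fi [fi_inj cC cK c_onto]]] := systematic_encoder C.
have c_sep a b : a != b -> (2 * td + 1 <= dH (c a) (c b))%N.
  by move=> ab; apply: C_sep; rewrite ?cC //; apply: contra ab => /eqP/(can_inj cK) ->.
have c_cover v : exists u, (dH v (c u) <= td)%N.
  by have [x /c_onto[u ->] vx] := C_cover v; exists u.
have [g2 cover] := complement_enum fi_inj.
split; first exact: fcc_of_systematic_code f_lb c_sep cK cover.
move=> r p p_fcc; have := fcc_redundancy_gt c_cover f_nonconst p_fcc.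
by have := leq_card _ fi_inj; rewrite !card_ord; lia.
Qed.
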